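(* Let $n\in\mathbb{N}$, $m\in\{1,\dots,n\}$ and $\alpha\in[0,1]$. In the additive noise ordinal optimisation model (see context), the success probability satisfies $$1-(1-\alpha)^{m}\;\le\; p^{\mathrm{A}}_{\mathrm{success}}(n,m,\alpha)\;\le\; 1-(1-\alpha)^{n}.$$
   Context: Ordinal optimisation model: let $(Z_1,X_1),\dots,(Z_n,X_n)$ be i.i.d. copies of a pair $(Z,X)$ of real random variables. Order the observations $Z_1,\dots,Z_n$ increasingly as $Z_{1:n}\le\dots\le Z_{n:n}$ and, for $i=1,\dots,m$, let $X_{\langle i\rangle}$ denote the $X$-value paired with $Z_{i:n}$ (the concomitant). Let $x^*_\alpha$ be the $\alpha$-quantile of $X$ (so $\Pr(X\le x^*_\alpha)=\alpha$ for continuous $X$). The success probability is $$p_{\mathrm{success}}(n,m,\alpha)=\Pr\Big(\min_{1\le i\le m}X_{\langle i\rangle}\le x^*_\alpha\Big).$$ Additive noise model: $Z_i=X_i+Y_i$ where $X_i$ and $Y_i$ are independent continuous random variables (with $(X_i,Y_i)$ i.i.d. over $i$); the success probability in this model is denoted $p^{\mathrm{A}}_{\mathrm{success}}(n,m,\alpha)$. *)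

From HB Require Import structures.
From mathcomp Require Import all_boot all_order all_algebra.
From mathcomp Require Import all_classical all_reals all_analysis.
Set Implicit Arguments. Unset Strict Implicit. Unset Printing Implicit Defensive.
Import Order.TTheory GRing.Theory Num.Theory.
Local Open Scope classical_set_scope.
Local Open Scope ring_scope.

(* rank z j = (position of z j in the increasing ordering of z) - 1, ties
   broken by index (stable sort); z_{(rank z j)+1 : n} = z j.  The map j |-> rank z j
   is a bijection 'I_n -> {0,..,n-1}. *)
Definition rank (R : realType) (n : nat) (z : 'I_n -> R) (j : 'I_n) : nat :=
  #|[set k : 'I_n | (z k < z j) || ((z k == z j) && (k < j)%N)]|.

Definition mutual_indep (d : measure_display) (T : measurableType d) (R : realType)
  (P : probability T R) (I : finType) (V : I -> T -> R) : Prop :=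
  forall B : I -> set R, (forall i, measurable (B i)) ->
    P (\bigcap_(i in [set: I]) (V i @^-1` B i)) =
    (\prod_(i : I) fine (P (V i @^-1` B i)))%:E.

Definition same_law (d : measure_display) (T : measurableType d) (R : realType)
  (P : probability T R) (U V : T -> R) : Prop :=
  forall B : set R, measurable B -> P (U @^-1` B) = P (V @^-1` B).

Definition atomless (d : measure_display) (T : measurableType d) (R : realType)
  (P : probability T R) (U : T -> R) : Prop :=
  forall r : R, P (U @^-1` [set r]) = 0%E.

(* Success event: min_{1<=i<=m} X_<i> <= x, i.e. some index among the m
   smallest Z-values has X-value <= x. *)
Definition success_event (T : Type) (R : realType) (n m : nat)
  (Z X : 'I_n -> T -> R) (x : \bar R) : set T :=
  [set w | exists j : 'I_n, (rank (fun k => Z k w) j < m)%N /\ ((X j w)%:E <= x)%E].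

(* Write S for the m indices with the smallest Z-values (ties broken by index)
   and B for the indices with X > xa; the method fails exactly when S is a
   subset of B.  Success needs some X_j <= xa, whence the upper bound.
   For the lower bound fix the block A = {0, ..., m-1}.  In a failing
   configuration (S, B), exchange the X-values of the good indices of A \ S
   with those of as many (bad) indices of S \ A.  This lowers Z on S and
   raises it off S, so S does not move, and afterwards all of A is bad.  The
   exchange permutes the i.i.d. X's, hence preserves the joint law; it depends
   only on (S, B) and can be read back from the new configuration.  Summing
   over configurations, P(S <= B) <= P(A <= B) = (1 - alpha)^m. *)

From HB Require Import structures.
From mathcomp Require Import all_boot all_order all_algebra.
From mathcomp Require Import all_classical all_reals all_analysis.
From mathcomp Require Import fingroup perm measurable_realfun.
Import Order.TTheory GRing.Theory Num.Theory.
Set Implicit Arguments. Unset Strict Implicit. Unset Printing Implicit Defensive.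
Local Open Scope ring_scope.

Section Rank.
Variables (R : realType) (n : nat).
Implicit Types (z : 'I_n -> R) (i j k : 'I_n).

Definition before z k j := (z k < z j) || ((z k == z j) && (k < j)%N).

Lemma rankE z j : rank z j = #|[set k | before z k j]|.
Proof.
by apply: eq_card => k; rewrite finset.in_set; apply/idP/idP => [/set_mem|/mem_set].
Qed.

Lemma before_irr z j : before z j j = false.
Proof. by rewrite /before ltxx eqxx ltnn. Qed.

Lemma before_trans z i j k : before z i j -> before z j k -> before z i k.
Proof.
rewrite /before => /orP[h1|/andP[/eqP e1 h1]] /orP[h2|/andP[/eqP e2 h2]].
- by rewrite (lt_trans h1 h2).
- by rewrite -e2 h1.
- by rewrite e1 h2.
- by rewrite e1 e2 eqxx (ltn_trans h1 h2) orbT.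
Qed.

Lemma before_asym z j k : before z j k -> before z k j = false.
Proof. by move=> jk; apply/negP => /(before_trans jk); rewrite before_irr. Qed.

Lemma before_total z j k : j != k -> before z j k || before z k j.
Proof.
move=> jk; rewrite /before; case: (ltgtP (z j) (z k)) => //= e.
rewrite ?e ?eqxx /=; case: (ltngtP j k) => // /val_inj ejk.
by rewrite ejk eqxx in jk.
Qed.

Lemma rank_before z j k : before z j k -> (rank z j < rank z k)%N.
Proof.
move=> jk; rewrite !rankE; apply: proper_card; apply/properP; split.
  by apply/fintype.subsetP => i; rewrite !inE => /before_trans; apply.
by exists j; rewrite !inE ?before_irr.
Qed.

Lemma rank_inj z : injective (rank z).
Proof.
move=> j k e; apply/eqP/negPn/negP => /(before_total z).
by case/orP => /rank_before; rewrite e ltnn.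
Qed.

Lemma rank_ltn z j : (rank z j < n)%N.
Proof.
rewrite rankE -[n in (_ < n)%N]card_ord -cardsT; apply: proper_card.
by rewrite properT; apply/negP => /eqP/setP/(_ j); rewrite !inE before_irr.
Qed.

Lemma card_ord_lt m : (m <= n)%N -> #|[set i : 'I_n | (i < m)%N]| = m.
Proof.
move=> mn; have widen_inj : injective (widen_ord mn) by move=> i k /(congr1 val) /= /val_inj.
rewrite -[RHS]card_ord -(card_imset _ widen_inj).
apply: eq_card => i; rewrite inE; apply/idP/imsetP => [im|[k _ ->]].
  by exists (Ordinal im) => //; apply: val_inj.
by rewrite /= ltn_ord.
Qed.

Lemma card_low_ranks z m : (m <= n)%N -> #|[set j | (rank z j < m)%N]| = m.
Proof.
move=> mn; rewrite -[RHS](card_ord_lt mn).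
pose r j : 'I_n := Ordinal (rank_ltn z j).
have r_inj : injective r by move=> j k /(congr1 val) /rank_inj.
by rewrite -[RHS](card_preimset _ r_inj); apply: eq_card => j; rewrite !inE.
Qed.

Lemma before_mono z z' t u :
  z' t <= z t -> z u <= z' u -> before z t u -> before z' t u.
Proof.
rewrite /before => h1 h2 /orP[h|/andP[/eqP e h]].
  by rewrite (le_lt_trans h1 (lt_le_trans h h2)).
have : z' t <= z' u by rewrite (le_trans h1) // e.
by rewrite le_eqVlt => /orP[->|->] //; rewrite h orbT.
Qed.

Lemma low_ranks_stable z z' m (S : {set 'I_n}) : (m <= n)%N ->
  [set j | (rank z j < m)%N] = S ->
  (forall t, t \in S -> z' t <= z t) ->
  (forall u, u \notin S -> z u <= z' u) ->
  [set j | (rank z' j < m)%N] = S.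
Proof.
move=> mn defS le_in le_out.
have before_out t u : t \in S -> u \notin S -> before z' t u.
  move=> tS uS; apply: before_mono (le_in t tS) (le_out u uS) _.
  have /(before_total z) : t != u by apply: contraNneq uS => <-.
  case/orP=> // /rank_before ut; move: tS uS; rewrite -defS !inE => tS.
  by rewrite (ltn_trans ut tS).
have cardS : #|S| = m by rewrite -defS card_low_ranks.
apply/esym/eqP; rewrite eqEcard card_low_ranks // cardS leqnn andbT.
apply/fintype.subsetP => t tS; rewrite inE rankE -cardS (cardsD1 t S) tS add1n ltnS.
apply/subset_leq_card/fintype.subsetP => k; rewrite !inE => kt.
apply/andP; split; first by apply: contraTneq kt => ->; rewrite before_irr.
by apply: contraFT (before_asym kt) => /(before_out t k tS).
Qed.

End Rank.

Section Exchange.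
Variable T : finType.
Implicit Types (U W : {set T}) (x : T).

Definition exchangeable U W := (#|U| == #|W|) && [disjoint U & W].

Definition exchange_fun U W x : T :=
  if ~~ exchangeable U W then x
  else if x \in U then nth x (enum W) (index x (enum U))
  else if x \in W then nth x (enum U) (index x (enum W)) else x.

Lemma nth_enum_index_mem (A B : {set T}) x : #|A| = #|B| -> x \in A ->
  nth x (enum B) (index x (enum A)) \in B.
Proof.
by move=> cAB xA; rewrite -mem_enum mem_nth // -cardE -cAB cardE index_mem mem_enum.
Qed.

Lemma nth_enum_indexK (A B : {set T}) x : #|A| = #|B| -> x \in A ->
  let y := nth x (enum B) (index x (enum A)) in nth y (enum A) (index y (enum B)) = x.
Proof.
move=> cAB xA /=; rewrite index_uniq ?enum_uniq ?nth_index ?mem_enum //.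
by rewrite -cardE -cAB cardE index_mem mem_enum.
Qed.

Lemma exchange_funK U W : involutive (exchange_fun U W).
Proof.
rewrite /exchange_fun => x; case: (boolP (exchangeable U W)) => //= /andP[/eqP cUW dUW].
case: (boolP (x \in U)) => [xU|xNU].
  have yW := nth_enum_index_mem cUW xU.
  by rewrite (disjointFl dUW yW) yW nth_enum_indexK.
case: (boolP (x \in W)) => [xW|xNW]; last by rewrite (negbTE xNU) (negbTE xNW).
by rewrite (nth_enum_index_mem (esym cUW) xW) nth_enum_indexK.
Qed.

Definition exchange U W : {perm T} := perm (inv_inj (@exchange_funK U W)).

Lemma exchangeK U W : involutive (exchange U W).
Proof. by move=> x; rewrite !permE exchange_funK. Qed.

Lemma exchange_in U W x :
  exchangeable U W -> x \in U -> exchange U W x \in W.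
Proof.
rewrite permE /exchange_fun => okUW xU; rewrite okUW xU.
by case/andP: okUW => /eqP cUW _; apply: nth_enum_index_mem.
Qed.

Lemma exchange_inW U W x :
  exchangeable U W -> x \in W -> exchange U W x \in U.
Proof.
rewrite permE /exchange_fun => okUW xW; case/andP: (okUW) => /eqP cUW dUW.
by rewrite okUW (disjointFl dUW xW) xW; apply: nth_enum_index_mem.
Qed.

Lemma exchange_out U W x : x \notin U -> x \notin W -> exchange U W x = x.
Proof.
by move=> xU xW; rewrite permE /exchange_fun (negbTE xU) (negbTE xW); case: ifP.
Qed.

End Exchange.

Section Configuration.
Variables (R : realType) (n m : nat) (xa : \bar R).
Hypothesis mn : (m <= n)%N.
Implicit Types (v : 'I_n + 'I_n -> R) (S : {set 'I_n}) (c : {set 'I_n} * {set 'I_n}).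

Definition zval v k := v (inl k) + v (inr k).

(* inl k carries X_k and inr k carries Y_k; the configuration is (S, B). *)
Definition config v : {set 'I_n} * {set 'I_n} :=
  ([set j | (rank (zval v) j < m)%N], [set j | (xa < (v (inl j))%:E)%E]).

Definition permute_x (s : 'I_n -> 'I_n) v : 'I_n + 'I_n -> R :=
  fun i => match i with inl k => v (inl (s k)) | inr k => v (inr k) end.

Definition block : {set 'I_n} := [set i : 'I_n | (i < m)%N].

Definition failing := [set c : {set 'I_n} * {set 'I_n} | (c.1 \subset c.2) && (#|c.1| == m)].

Definition good_out c := (block :\: c.1) :\: c.2.

Definition bad_in c := exchange (block :\: c.1) (c.1 :\: block) @: good_out c.

Definition repair c := exchange (good_out c) (bad_in c).

Definition repaired c := (c.1, [set k | repair c k \in c.2]).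

Lemma card_block : #|block| = m.
Proof. exact: card_ord_lt. Qed.

Lemma card_config v : #|(config v).1| = m.
Proof. exact: card_low_ranks. Qed.

Lemma exchangeable_block S : #|S| = m -> exchangeable (block :\: S) (S :\: block).
Proof.
move=> cS; rewrite /exchangeable !cardsD card_block cS finset.setIC eqxx /=.
rewrite -setI_eq0; apply/eqP/setP => x; rewrite !inE.
by case: (x \in S); rewrite ?andbF.
Qed.

Lemma bad_in_sub c : #|c.1| = m -> bad_in c \subset c.1 :\: block.
Proof.
move=> c1m; apply/fintype.subsetP => _ /imsetP[x xE ->].
by apply: exchange_in (exchangeable_block c1m) _; move: xE; rewrite inE => /andP[].
Qed.

Lemma exchangeable_repair c : #|c.1| = m -> exchangeable (good_out c) (bad_in c).
Proof.
move=> c1m; rewrite /exchangeable card_imset ?eqxx /=; last exact: perm_inj.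
rewrite -setI_eq0; apply/eqP/setP => x; rewrite !inE.
case: (boolP (x \in bad_in c)) => [xW|]; rewrite ?andbF //.
have := fintype.subsetP (bad_in_sub c1m) x xW.
by rewrite inE => /andP[_ ->]; rewrite andbF.
Qed.

Section Failing.
Variable c : {set 'I_n} * {set 'I_n}.
Hypothesis c_failing : c \in failing.

Let c1_sub : c.1 \subset c.2. Proof. by move: c_failing; rewrite inE => /andP[]. Qed.
Let c1m : #|c.1| = m. Proof. by move: c_failing; rewrite inE => /andP[_ /eqP]. Qed.
Let exch := exchangeable_repair c1m.
Let bad_inP := fintype.subsetP (bad_in_sub c1m).

Lemma repair_out x : x \notin good_out c -> x \notin bad_in c -> repair c x = x.
Proof. exact: exchange_out. Qed.

Lemma block_sub_repaired : block \subset (repaired c).2.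
Proof.
apply/fintype.subsetP => x; rewrite [x \in block]inE => xA; rewrite inE /=.
have xW : x \notin bad_in c by apply/negP => /bad_inP; rewrite !inE xA.
case: (boolP (x \in c.1)) => xS.
  rewrite repair_out //; first exact: (fintype.subsetP c1_sub).
  by rewrite !inE xS /= andbF.
case: (boolP (x \in good_out c)) => xE.
  have := bad_inP (exchange_in exch xE); rewrite inE => /andP[_].
  exact: (fintype.subsetP c1_sub).
by rewrite repair_out //; move: xE; rewrite !inE xA xS /= andbT negbK.
Qed.

(* The repair can be read off the repaired configuration: its bad_in part is
   the set of indices of S outside the block that became good. *)
Lemma bad_in_repaired : c.1 :\: block :\: (repaired c).2 = bad_in c.
Proof.
apply/setP => y; rewrite finset.in_setD [y \in (repaired c).2]inE /=.
case: (boolP (y \in bad_in c)) => yW.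
  have := exchange_inW exch yW; rewrite -/(repair c) inE => /andP[-> _].
  by rewrite (bad_inP yW).
case: (boolP (y \in c.1 :\: block)) => [yS|]; last by rewrite andbF.
have yc1 : y \in c.1 by case/setDP: yS.
rewrite repair_out ?(fintype.subsetP c1_sub) //.
by rewrite !inE yc1 /= andbF.
Qed.

Section Repair.
Variable v : 'I_n + 'I_n -> R.
Hypothesis c_config : config v = c.

Let badE j : (j \in c.2) = (xa < (v (inl j))%:E)%E.
Proof. by rewrite -c_config inE. Qed.

Lemma good_le_bad j k : j \notin c.2 -> k \in c.2 -> v (inl j) <= v (inl k).
Proof. by rewrite !badE -leNgt => jg kb; rewrite -lee_fin ltW // (le_lt_trans jg kb). Qed.

Lemma repair_le_in t : t \in c.1 -> v (inl (repair c t)) <= v (inl t).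
Proof.
move=> tS; have tB := fintype.subsetP c1_sub t tS.
case: (boolP (t \in bad_in c)) => tW; last by rewrite repair_out // !inE tS /= andbF.
by apply: good_le_bad tB; have := exchange_inW exch tW; rewrite inE => /andP[].
Qed.

Lemma repair_ge_out u : u \notin c.1 -> v (inl u) <= v (inl (repair c u)).
Proof.
move=> uS; case: (boolP (u \in good_out c)) => uE.
  apply: good_le_bad; first by move: uE; rewrite inE => /andP[].
  have := bad_inP (exchange_in exch uE); rewrite inE => /andP[_].
  exact: (fintype.subsetP c1_sub).
by rewrite repair_out //; apply: contra uS => /bad_inP; rewrite inE => /andP[].
Qed.

Lemma config_repair : config (permute_x (repair c) v) = repaired c.
Proof.
rewrite /config /repaired; congr (_, _); last by apply/setP => j; rewrite !inE badE.
apply: low_ranks_stable mn (congr1 fst c_config) _ _ => [t tS|u uS];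
  by rewrite /zval /= lerD2r ?repair_le_in ?repair_ge_out.
Qed.

End Repair.

End Failing.

Lemma repaired_inj : {in failing &, injective repaired}.
Proof.
move=> [S B1] [S' B2] D1 D2 e; have eS : S = S' by case: e.
subst S'.
have eW : bad_in (S, B1) = bad_in (S, B2).
  by rewrite -bad_in_repaired // -[RHS]bad_in_repaired // e.
have eE : good_out (S, B1) = good_out (S, B2).
  by apply: (imset_inj (@perm_inj _ (exchange (block :\: S) (S :\: block)))).
have erep : repair (S, B1) = repair (S, B2) by rewrite /repair eE eW.
case: e => /setP eB; congr (_, _); apply/setP => x.
by have := eB (repair (S, B1) x); rewrite !inE /= -erep /repair !exchangeK.
Qed.

End Configuration.

Definition outcome (R : realType) (n : nat) := 'I_n + 'I_n -> R.
HB.instance Definition _ (R : realType) n := gen_eqMixin (outcome R n).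
HB.instance Definition _ (R : realType) n := gen_choiceMixin (outcome R n).
HB.instance Definition _ (R : realType) n := isPointed.Build (outcome R n) (fun _ => 0).

Section Boxes.
Local Open Scope classical_set_scope.
Variables (R : realType) (n : nat).

Definition box (B : 'I_n + 'I_n -> set R) : set (outcome R n) := [set v | forall i, B i (v i)].

Definition boxes : set (set (outcome R n)) :=
  [set A | exists B : 'I_n + 'I_n -> set R, (forall i, measurable (B i)) /\ A = box B].

Lemma measurable_coord i : measurable_fun setT (fun v : g_sigma_algebraType boxes => v i).
Proof.
move=> _ A mA; rewrite setTI; apply: sub_sigma_algebra.
exists (fun j => if j == i then A else setT); split.
  by move=> j; case: ifP.
apply/seteqP; split => v /=.
  by move=> h j; case: ifP => // /eqP ->.
by move=> h; have := h i; rewrite eqxx.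
Qed.

End Boxes.

Lemma measurable_egt (R : realType) (xa : \bar R) : measurable [set r : R | (xa < r%:E)%E].
Proof.
have := EFin_measurable measurableT (emeasurable_itv `]xa, +oo[); rewrite setTI.
by congr measurable; apply/seteqP; split => r; rewrite /= in_itv /= andbT.
Qed.

Section PermutationLaw.
Local Open Scope classical_set_scope.
Context d (T : measurableType d) (R : realType) (P : probability T R) (n : nat)
  (X Y : 'I_n -> T -> R).
Hypothesis mX : forall k, measurable_fun setT (X k).
Hypothesis mY : forall k, measurable_fun setT (Y k).
Let XY i := match i with inl k => X k | inr k => Y k end.
Hypothesis XY_indep : mutual_indep P XY.
Hypothesis X_law : forall i j, same_law P (X i) (X j).
Local Notation outcomeT := (g_sigma_algebraType (@boxes R n)).

Definition observe (s : 'I_n -> 'I_n) (w : T) : outcomeT :=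
  fun i => match i with inl k => X (s k) w | inr k => Y k w end.

Definition box_perm (s : {perm 'I_n}) (B : 'I_n + 'I_n -> set R) i :=
  match i with inl k => B (inl (s^-1 k)%g) | inr k => B (inr k) end.

Lemma observe_box (s : {perm 'I_n}) B :
  observe s @^-1` box B = \bigcap_(i in [set: 'I_n + 'I_n]) (XY i @^-1` box_perm s B i).
Proof.
apply/seteqP; split => w /=.
  move=> h [k|k] _ /=; last exact: (h (inr k)).
  by have := h (inl (s^-1 k)%g); rewrite /= permKV.
move=> h [k|k] /=; last exact: (h (inr k) I).
by have := h (inl (s k)) I; rewrite /= permK.
Qed.

Lemma measurable_XY i B : measurable B -> measurable (XY i @^-1` B).
Proof. by move=> mB; rewrite -[X in measurable X]setTI; case: i => k; [exact: mX|exact: mY]. Qed.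

Lemma measurable_observe (s : {perm 'I_n}) : measurable_fun setT (observe s).
Proof.
apply: (@measurability _ _ _ _ setT (observe s) (@boxes R n)); first by [].
rewrite /preimage_set_system => _ [A [B [mB ->]] <-]; rewrite setTI observe_box.
apply: fin_bigcap_measurable; first exact: finite_finset.
by move=> [k|k] _; apply: measurable_XY; apply: mB.
Qed.

Lemma observe1 : observe (1%g : {perm 'I_n}) = observe id.
Proof. by apply/funext => w; apply/funext => -[k|k] //=; rewrite perm1. Qed.

Lemma observe_box_law (s : {perm 'I_n}) B : (forall i, measurable (B i)) ->
  P (observe s @^-1` box B) = P (observe id @^-1` box B).
Proof.
move=> mB; have mBs (t : {perm 'I_n}) i : measurable (box_perm t B i) by case: i => k; apply: mB.
rewrite -observe1 !observe_box !XY_indep // !big_sumType /=; congr (_ * _)%:E.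
rewrite (reindex_inj (@perm_inj _ s)) /=; apply: eq_bigr => k _.
by rewrite permK invg1 perm1 (X_law (s k) k).
Qed.

(* Boxes form a pi-system generating the sigma-algebra, so agreeing on boxes suffices. *)
Lemma observe_perm_law (s : {perm 'I_n}) (A : set outcomeT) : measurable A ->
  P (observe s @^-1` A) = P (observe id @^-1` A).
Proof.
move=> mA.
apply: (@measure_unique _ R outcomeT (@boxes R n) (fun=> setT) erefl _ _ _
  (pushforward P (observe s)) (pushforward P (observe id))) => //.
- move=> _ _ [B1 [mB1 ->]] [B2 [mB2 ->]]; exists (fun i => B1 i `&` B2 i); split.
    by move=> i; apply: measurableI.
  by apply/seteqP; split => v /=; [move=> [h1 h2] i; split | move=> h; split => i; case: (h i)].
- by move=> _; exists (fun=> setT); split => //; apply/seteqP; split.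
- by rewrite bigcup_const.
- exact: measurable_observe.
- by rewrite -observe1; exact: measurable_observe.
- by move=> ? ? _ [B [mB ->]]; rewrite /pushforward; exact: observe_box_law.
- by move=> ? _ /=; rewrite /pushforward /= preimage_setT probability_setT ltry.
Qed.

End PermutationLaw.

Section ConfigMeasurable.
Local Open Scope classical_set_scope.
Variables (R : realType) (n m : nat) (xa : \bar R).
Local Notation outcomeT := (g_sigma_algebraType (@boxes R n)).

Definition comparison (i : ('I_n * 'I_n) + 'I_n) (v : outcome R n) : bool :=
  match i with inl (k, j) => zval v k < zval v j | inr j => (xa < (v (inl j))%:E)%E end.

Lemma measurable_comparison i b : measurable [set v : outcomeT | comparison i v = b].
Proof.
suff mi : measurable [set v : outcomeT | comparison i v].
  case: b; first by congr measurable: mi; apply/seteqP; split => v /= /eqP.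
  congr measurable: (measurableC mi).
  by apply/seteqP; split => v /=; case: (comparison i v).
case: i => [[k j]|j] /=; last first.
  have := measurable_coord (inl j) measurableT (measurable_egt xa); rewrite setTI.
  by congr measurable.
have mz i : measurable_fun setT (fun v : outcomeT => zval v i).
  by apply: measurable_funD; apply: measurable_coord.
have := @measurable_fun_ltr _ _ _ setT _ _ (mz k) (mz j) measurableT [set true] I.
by rewrite setTI; congr measurable; apply/seteqP; split => v /=; case: (zval v k < zval v j).
Qed.

(* The configuration is a function of finitely many comparisons. *)
Definition config_of_comparisons (f : {ffun ('I_n * 'I_n) + 'I_n -> bool}) :=
  ([set j | (#|[set k | f (inl (k, j)) ||
                 (~~ f (inl (k, j)) && ~~ f (inl (j, k)) && (k < j)%N)]| < m)%N]%SET,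
   [set j | f (inr j)]%SET).

Lemma config_comparisons (v : outcome R n) :
  config m xa v = config_of_comparisons [ffun i => comparison i v].
Proof.
rewrite /config /config_of_comparisons; congr (_, _); apply: eq_finset => j; rewrite ?ffunE //.
rewrite rankE; congr (_ < m)%N; apply: eq_card => k; rewrite !inE !ffunE /= /before.
by case: (ltgtP (zval v k) (zval v j)).
Qed.

Lemma measurable_config (Q : pred ({set 'I_n} * {set 'I_n})) :
  measurable [set v : outcomeT | Q (config m xa v)].
Proof.
have -> : [set v : outcomeT | Q (config m xa v)] =
    \bigcup_(f in [set f | Q (config_of_comparisons f)])
      \bigcap_(i in [set: ('I_n * 'I_n) + 'I_n]) [set v : outcomeT | comparison i v = f i].
  apply/seteqP; split => v /=.
    move=> Qv; exists [ffun i => comparison i v]; first by rewrite /= -config_comparisons.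
    by move=> i _ /=; rewrite ffunE.
  move=> [f /= Qf vf]; suff -> : config m xa v = config_of_comparisons f by [].
  by rewrite config_comparisons; congr config_of_comparisons; apply/ffunP => i; rewrite ffunE vf.
apply: fin_bigcup_measurable; first exact: finite_finset.
move=> f _; apply: fin_bigcap_measurable; first exact: finite_finset.
by move=> i _; exact: measurable_comparison.
Qed.

End ConfigMeasurable.

Section SuccessProbability.
Local Open Scope classical_set_scope.
Context d (T : measurableType d) (R : realType) (P : probability T R) (n m : nat)
  (alpha : R) (xa : \bar R) (X Y : 'I_n -> T -> R).
Hypothesis mX : forall k, measurable_fun setT (X k).
Hypothesis mY : forall k, measurable_fun setT (Y k).
Hypothesis XY_indep : mutual_indep P
  (fun i : 'I_n + 'I_n => match i with inl k => X k | inr k => Y k end).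
Hypothesis X_law : forall i j, same_law P (X i) (X j).
Hypothesis X_good : forall i, P [set w | ((X i w)%:E <= xa)%E] = alpha%:E.
Hypothesis mn : (m <= n)%N.

Local Notation config_t := ({set 'I_n} * {set 'I_n})%type.

Definition config_event (Q : pred config_t) : set T :=
  observe X Y id @^-1` [set v | Q (config m xa v)].

Lemma measurable_config_event Q : measurable (config_event Q).
Proof.
rewrite /config_event -[X in measurable X]setTI -observe1.
by apply: measurable_observe => //; apply: measurable_config.
Qed.

Lemma config_event_seq (s : seq config_t) : uniq s ->
  P (config_event (mem s)) = (\sum_(c <- s) P (config_event (pred1 c)))%E.
Proof.
elim: s => [_|a s IH /= /andP[aNs us]].
  by rewrite big_nil -(measure0 P); congr (P _); apply/seteqP; split.
rewrite big_cons -IH // -measureU; try exact: measurable_config_event.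
  by congr (P _); apply/seteqP; split => w; rewrite /config_event /= inE => /orP.
apply/seteqP; split => w // [] /=; rewrite /config_event /= => /eqP ->.
by rewrite (negbTE aNs).
Qed.

Lemma config_event_sum (Q : {pred config_t}) :
  P (config_event Q) = (\sum_(c in Q) P (config_event (pred1 c)))%E.
Proof.
rewrite -big_enum -config_event_seq ?enum_uniq //; congr (P _).
by apply/seteqP; split => w; rewrite /config_event /= mem_enum.
Qed.

Lemma prob_bad j : P (X j @^-1` [set r | (xa < r%:E)%E]) = (1 - alpha)%:E.
Proof.
have -> : X j @^-1` [set r | (xa < r%:E)%E] = ~` [set w | ((X j w)%:E <= xa)%E].
  by apply/seteqP; split => w /=; rewrite ltNge => /negP.
rewrite probability_setC ?X_good //; rewrite -[X in measurable X]setTI.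
have -> : [set w | ((X j w)%:E <= xa)%E] = X j @^-1` ~` [set r | (xa < r%:E)%E].
  by apply/seteqP; split => w /=; rewrite leNgt => /negP.
exact: mX j measurableT _ (measurableC (measurable_egt xa)).
Qed.

Lemma prob_all_bad (A : {set 'I_n}) :
  P [set w | forall j, j \in A -> (xa < (X j w)%:E)%E] = ((1 - alpha) ^+ #|A|)%:E.
Proof.
pose B (i : 'I_n + 'I_n) : set R := match i with
  | inl j => if j \in A then [set r : R | (xa < r%:E)%E] else setT
  | inr _ => setT end.
have mB i : measurable (B i).
  by case: i => [j|j] //=; case: ifP => _ //; exact: measurable_egt.
rewrite (_ : [set w | _] = \bigcap_(i in [set: 'I_n + 'I_n])
    ((fun i => match i with inl k => X k | inr k => Y k end) i @^-1` B i)).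
  rewrite XY_indep // big_sumType /= [X in _ * X]big1 ?mulr1; last first.
    by move=> k _; rewrite preimage_setT probability_setT.
  congr _%:E; rewrite -prodr_const [RHS]big_mkcond /=; apply: eq_bigr => j _ /=.
  by case: ifP => _; rewrite ?prob_bad ?preimage_setT ?probability_setT.
apply/seteqP; split => w /=.
  by move=> h [j|j] _ //=; case: ifP => // /h.
by move=> h j jA; have := h (inl j) I; rewrite /= jA.
Qed.

Lemma observe_perm (s : {perm 'I_n}) w :
  observe X Y s w = permute_x s (observe X Y id w).
Proof. by []. Qed.

Lemma config_event_le_repaired c : c \in failing n m ->
  (P (config_event (pred1 c)) <= P (config_event (pred1 (repaired m c))))%E.
Proof.
move=> cD; pose A := [set v | pred1 (repaired m c) (config m xa v)].
have mA : measurable (A : set (g_sigma_algebraType (@boxes R n))) by apply: measurable_config.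
rewrite [X in (_ <= X)%E](_ : _ = P (observe X Y (repair m c) @^-1` A)); last first.
  by rewrite (observe_perm_law mX mY XY_indep X_law).
apply: le_measure.
- exact/mem_set/measurable_config_event.
- by apply/mem_set; rewrite -[X in measurable X]setTI; apply: measurable_observe.
- by move=> w /eqP cw; rewrite /A /= observe_perm (config_repair mn cD cw).
Qed.

Lemma config_eventC (Q : pred config_t) : config_event (fun c => ~~ Q c) = ~` config_event Q.
Proof. by apply/seteqP; split => w; rewrite /config_event /= => /negP. Qed.

Lemma prob_failure_le :
  (P (config_event (fun c => c.1 \subset c.2)) <= ((1 - alpha) ^+ m)%:E)%E.
Proof.
have -> : config_event (fun c => c.1 \subset c.2) = config_event (mem (failing n m)).
  apply/seteqP; split => w; rewrite /config_event /= inE /=.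
    by move=> ->; rewrite card_config // eqxx.
  by case/andP.
pose block_bad := [set c : config_t | block n m \subset c.2]%SET.
have block_badE : config_event (mem block_bad) =
    [set w | forall j, j \in block n m -> (xa < (X j w)%:E)%E].
  apply/seteqP; split => w; rewrite /config_event /= inE /=.
    by move=> /fintype.subsetP h j /h; rewrite inE.
  by move=> h; apply/fintype.subsetP => j /h; rewrite inE.
apply: (@le_trans _ _ (P (config_event (mem block_bad)))); last first.
  by rewrite block_badE prob_all_bad card_block.
rewrite !config_event_sum.
apply: (@le_trans _ _ (\sum_(c in failing n m) P (config_event (pred1 (repaired m c))))%E).
  by apply: lee_sum => c; exact: config_event_le_repaired.
rewrite -(big_imset (fun c => P (config_event (pred1 c))) (repaired_inj mn)) /=.
apply: lee_sum_nneg_subset => [c /imsetP[c0 c0D ->]|c _]; first by rewrite inE block_sub_repaired.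
by apply: measure_ge0; exact: measurable_config_event.
Qed.

Let Z i w := X i w + Y i w.

Lemma success_eventE :
  success_event m Z X xa = config_event (fun c => ~~ (c.1 \subset c.2)).
Proof.
apply/seteqP; split => w; rewrite /config_event /success_event /=.
  by move=> [j [jS jX]]; apply/fintype.subsetPn; exists j; rewrite inE // -leNgt.
by move/fintype.subsetPn => [j]; rewrite !inE -leNgt; exists j.
Qed.

Lemma success_ge : ((1 - (1 - alpha) ^+ m)%:E <= P (success_event m Z X xa))%E.
Proof.
rewrite success_eventE config_eventC probability_setC; last exact: measurable_config_event.
by rewrite EFinB; apply: leeB => //; exact: prob_failure_le.
Qed.

Lemma success_le : (P (success_event m Z X xa) <= (1 - (1 - alpha) ^+ n)%:E)%E.
Proof.
pose all_bad := [set w | forall j, j \in [set: 'I_n]%SET -> (xa < (X j w)%:E)%E].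
have m_all_bad : measurable all_bad.
  rewrite (_ : all_bad = \bigcap_(j in [set: 'I_n]) (X j @^-1` [set r | (xa < r%:E)%E])).
    apply: fin_bigcap_measurable => [|j _]; first exact: finite_finset.
    by rewrite -[X in measurable X]setTI; apply: mX => //; exact: measurable_egt.
  by apply/seteqP; split => w /= h j _; apply: h.
apply: (@le_trans _ _ (P (~` all_bad))).
  rewrite success_eventE; apply: le_measure.
  - exact/mem_set/measurable_config_event.
  - exact/mem_set/measurableC.
  move=> w /= /fintype.subsetPn[j jS jB] h; move: jB; rewrite inE -leNgt.
  by rewrite leNgt h.
by rewrite probability_setC // prob_all_bad cardsT card_ord EFinB.
Qed.

End SuccessProbability.

Local Open Scope classical_set_scope.
Local Open Scope ring_scope.

Theorem mainTheorem1 (d : measure_display) (T : measurableType d) (R : realType)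
  (P : probability T R) (n m : nat) (alpha : R) (xa : \bar R)
  (X Y : 'I_n -> {RV P >-> R}) :
  (0 < m)%N -> (m <= n)%N -> 0 <= alpha -> alpha <= 1 ->
  mutual_indep P (fun i : 'I_n + 'I_n =>
    match i with inl k => (X k : T -> R) | inr k => (Y k : T -> R) end) ->
  (forall i j, same_law P (X i) (X j)) ->
  (forall i j, same_law P (Y i) (Y j)) ->
  (forall i, atomless P (X i)) ->
  (forall i, atomless P (Y i)) ->
  (forall i, P [set w | ((X i w)%:E <= xa)%E] = alpha%:E) ->
  let Z := fun i w => X i w + Y i w in
  ((1 - (1 - alpha) ^+ m)%:E <= P (success_event m Z (fun i => X i : T -> R) xa))%E /\
  (P (success_event m Z (fun i => X i : T -> R) xa) <= (1 - (1 - alpha) ^+ n)%:E)%E.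
Proof.
move=> _ mn _ _ XY_indep X_law _ _ _ X_good Z.
have mX k : measurable_fun setT (X k : T -> R) by exact: measurable_funPT.
have mY k : measurable_fun setT (Y k : T -> R) by exact: measurable_funPT.
split; [exact: success_ge mX mY XY_indep X_law X_good mn | exact: success_le mX mY XY_indep X_good].
Qed.
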